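(* Let $\rho:F_n\to SL(2,\mathbb{C})$ be an irreducible representation of the free group $F_n$. Then there exists a choice of free generators $\epsilon_1,\dots,\epsilon_n$ of $F_n$ such that the $n$-tuple $A=(\rho(\epsilon_1),\dots,\rho(\epsilon_n))$ satisfies $\sigma_{12}(A)\neq0$ and $\nu_1(A)\neq0$.
   Context: For $A=(A_1,\dots,A_n)\in SL(2,\mathbb{C})^{\times n}$: $\sigma_{12}(A)=\mathsf{tr}(A_1A_2A_1^{-1}A_2^{-1})-2$ and $\nu_1(A)=\frac{(\mathsf{tr}A_1)^2}{2}-2$. Irreducible means no proper nonzero subspace of $\mathbb{C}^2$ is invariant under $\rho(F_n)$. *)

From HB Require Import structures.
From mathcomp Require Import all_boot all_order all_algebra.
From mathcomp Require Import complex Rstruct.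
From Stdlib Require Import Reals.
Set Implicit Arguments. Unset Strict Implicit. Unset Printing Implicit Defensive.
Import Order.TTheory GRing.Theory Num.Theory.
Local Open Scope ring_scope.

Definition CC : numClosedFieldType := (Rdefinitions.R)[i].

(* A letter (i, false) is the generator x_i, (i, true) is x_i^{-1}. *)
Definition letter (n : nat) := ('I_n * bool)%type.
Definition inv_letter n (a : letter n) : letter n := (a.1, ~~ a.2).

Fixpoint reduced n (w : seq (letter n)) : bool :=
  match w with
  | a :: ((b :: _) as w') => (b != inv_letter a) && reduced w'
  | _ => true
  end.

Definition push n (a : letter n) (w : seq (letter n)) : seq (letter n) :=
  if w is b :: w' then (if b == inv_letter a then w' else a :: w) else [:: a].

Definition wmul n (u v : seq (letter n)) : seq (letter n) := foldr (@push n) v u.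
Definition winv n (u : seq (letter n)) : seq (letter n) := rev (map (@inv_letter n) u).

Definition letter_img n (e : 'I_n -> seq (letter n)) (a : letter n) :=
  if a.2 then winv (e a.1) else e a.1.
Definition subst_hom n (e : 'I_n -> seq (letter n)) (w : seq (letter n)) :=
  foldr (fun a acc => wmul (letter_img e a) acc) [::] w.

(* (e 1, ..., e n) is a free basis of F_n: each e i is an element of F_n
   and the endomorphism x_i |-> e i is an automorphism (bijective). *)
Definition free_basis n (e : 'I_n -> seq (letter n)) : Prop :=
  (forall i, reduced (e i)) /\
  (forall y, reduced y -> exists x, reduced x /\ subst_hom e x = y) /\
  (forall x y, reduced x -> reduced y -> subst_hom e x = subst_hom e y -> x = y).

(* rho : F_n -> SL(2,C) is a group homomorphism (values on non-reduced
   words are irrelevant). *)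
Definition SL2_rep n (rho : seq (letter n) -> 'M[CC]_2) : Prop :=
  (forall u, reduced u -> \det (rho u) = 1) /\
  (forall u v, reduced u -> reduced v -> rho (wmul u v) = rho u *m rho v).

(* Irreducible: no proper nonzero subspace of C^2 (column vectors) is
   invariant under rho(F_n).  A subspace V is the span of the rows of U
   (read as vectors); invariance of V under v |-> M v is (U M^T <= U). *)
Definition irreducible_rep n (rho : seq (letter n) -> 'M[CC]_2) : Prop :=
  ~ exists U : 'M[CC]_2,
      [/\ leq 1 (\rank U), leq (\rank U) 1 &
          forall g, reduced g -> (U *m (rho g)^T <= U)%MS].

Definition sigma12 (A1 A2 : 'M[CC]_2) : CC :=
  \tr (A1 *m A2 *m invmx A1 *m invmx A2) - 2.
Definition nu1 (A1 : 'M[CC]_2) : CC := (\tr A1) ^+ 2 / 2 - 2.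

(* Let A_i = rho(x_i) and K(X, Y) = det (X Y - Y X), so that sigma12 = -K on
   SL(2, C).  If K vanished on all pairs (A_i, A_j) and (A_k, A_i A_j) of
   distinct indices, the A_i would share an eigenvector, contradicting
   irreducibility; so a permutation of the generators followed by at most one
   Nielsen move x_m |-> x_m x_l gives K(A_1, A_2) <> 0.  By Fricke's identity
   K = 4 + x y z - x^2 - y^2 - z^2 (x = tr X, y = tr Y, z = tr X Y), this
   forbids tr X, tr Y, tr X Y and tr X Y^-1 = x y - z from all being +-2; as K
   is invariant under swapping X, Y and under X |-> X Y^+-1, one more swap or
   Nielsen move makes tr A_1 <> +-2, i.e. nu1 <> 0.  Free bases are produced
   as substitutions with an inverse substitution, a class closed under
   composition. *)

From mathcomp Require Import all_boot all_order all_algebra.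
From mathcomp Require Import fingroup perm complex Rstruct ring.
Import GRing.Theory Num.Theory.
Set Implicit Arguments. Unset Strict Implicit. Unset Printing Implicit Defensive.
Local Open Scope ring_scope.

Section ReducedWords.

Variable n : nat.
Implicit Types (a b : letter n) (u v w x y : seq (letter n)).

Lemma inv_letterK : involutive (@inv_letter n).
Proof. by case=> i b; rewrite /inv_letter /= negbK. Qed.

Lemma reduced_cons a w :
  reduced (a :: w) = (if w is b :: _ then b != inv_letter a else true) && reduced w.
Proof. by case: w. Qed.

Lemma reduced_behead a w : reduced (a :: w) -> reduced w.
Proof. by rewrite reduced_cons => /andP[]. Qed.

Lemma reduced_sorted w : reduced w = sorted (fun a b => b != inv_letter a) w.
Proof. by elim: w => [|a [|b w] IH] //; rewrite reduced_cons IH. Qed.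

Lemma reduced_push a w : reduced w -> reduced (push a w).
Proof.
case: w => [|b w] // Hw /=; case: ifP => Hb; first exact: reduced_behead Hw.
by rewrite reduced_cons Hb Hw.
Qed.

Lemma pushK a w : reduced w -> push a (push (inv_letter a) w) = w.
Proof.
case: w => [|b w] Hw /=; first by rewrite eqxx.
case: ifP => [/eqP Eb|_]; last by rewrite /= eqxx.
move: Hw; rewrite {}Eb inv_letterK.
by case: w => [|c w] //= /andP[/negbTE ->].
Qed.

Lemma reduced_wmul u v : reduced v -> reduced (wmul u v).
Proof. by elim: u => [|a u IH] //= Hv; apply/reduced_push/IH. Qed.

Lemma wmul_push a x w : reduced w -> wmul (push a x) w = push a (wmul x w).
Proof.
move=> Hw; case: x => [|b x] //=; case: ifP => [/eqP ->|//].
by rewrite pushK // reduced_wmul.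
Qed.

Lemma wmulA u v w : reduced w -> wmul (wmul u v) w = wmul u (wmul v w).
Proof. by move=> Hw; elim: u => [|a u IH] //=; rewrite wmul_push // IH. Qed.

Lemma wmul_cat u v : reduced (u ++ v) -> wmul u v = u ++ v.
Proof.
elim: u => [|a u IH] //= Hr; rewrite IH; last exact: reduced_behead Hr.
by move: Hr; case: (u ++ v) => [|b w] //= /andP[/negbTE ->].
Qed.

Lemma wmulw1 u : reduced u -> wmul u [::] = u.
Proof. by move=> Hu; rewrite wmul_cat cats0. Qed.

Lemma winvK : involutive (@winv n).
Proof. by move=> u; rewrite /winv map_rev revK -map_comp (eq_map inv_letterK) map_id. Qed.

Lemma winv_cons a u : winv (a :: u) = winv u ++ [:: inv_letter a].
Proof. by rewrite /winv /= rev_cons cats1. Qed.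

Lemma reduced_winv u : reduced u -> reduced (winv u).
Proof.
rewrite !reduced_sorted /winv rev_sorted sorted_map.
case: u => [|a u] //=; rewrite (@eq_path _ _ (fun a b => b != inv_letter a)) // => b c /=.
by rewrite inv_letterK eq_sym.
Qed.

Lemma wmulwV u : reduced u -> wmul u (winv u) = [::].
Proof.
elim: u => [|a u IH] // Hu; have Hu' := reduced_behead Hu.
rewrite winv_cons -(wmul_cat (u := winv u)); last by rewrite -winv_cons reduced_winv.
by rewrite /= -wmulA // IH //= eqxx.
Qed.

Lemma wmulVw u : reduced u -> wmul (winv u) u = [::].
Proof. by move=> Hu; rewrite -{2}(winvK u) wmulwV // reduced_winv. Qed.

Lemma winv_unique y z : reduced y -> reduced z -> wmul y z = [::] -> z = winv y.
Proof.
move=> Hy Hz E; rewrite -[z]/(wmul [::] z) -(wmulVw Hy).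
by rewrite wmulA // E wmulw1 // reduced_winv.
Qed.

End ReducedWords.

Section Substitutions.

Variable n : nat.
Implicit Types (a : letter n) (u v w : seq (letter n)) (e f g : 'I_n -> seq (letter n)).

Definition gen (i : 'I_n) : seq (letter n) := [:: (i, false)].

Definition reduced_family e := forall i, reduced (e i).

Lemma reduced_letter_img e a : reduced_family e -> reduced (letter_img e a).
Proof. by move=> He; rewrite /letter_img; case: ifP => _; rewrite ?reduced_winv. Qed.

Lemma reduced_subst e w : reduced_family e -> reduced (subst_hom e w).
Proof. by move=> He; elim: w => [|a w IH] //=; apply: reduced_wmul. Qed.

Lemma reduced_family_subst e g : reduced_family e ->
  reduced_family (fun i => subst_hom e (g i)).
Proof. by move=> He i; apply: reduced_subst. Qed.

Lemma letter_img_inv e a : letter_img e (inv_letter a) = winv (letter_img e a).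
Proof. by case: a => i [] //=; rewrite /letter_img /= winvK. Qed.

Lemma subst_gen e i : reduced_family e -> subst_hom e (gen i) = e i.
Proof. by move=> He; rewrite /= wmulw1 // reduced_letter_img. Qed.

Lemma subst_push e a w : reduced_family e -> reduced w ->
  subst_hom e (push a w) = wmul (letter_img e a) (subst_hom e w).
Proof.
move=> He; case: w => [|b w] //= Hw; case: ifP => [/eqP ->|//].
by rewrite letter_img_inv -wmulA ?wmulwV ?reduced_letter_img ?reduced_subst.
Qed.

Lemma subst_wmul e u v : reduced_family e -> reduced v ->
  subst_hom e (wmul u v) = wmul (subst_hom e u) (subst_hom e v).
Proof.
move=> He Hv; elim: u => [|a u IH] //=.
by rewrite subst_push ?reduced_wmul // IH wmulA // reduced_subst.
Qed.

Lemma subst_winv e u : reduced_family e -> reduced u ->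
  subst_hom e (winv u) = winv (subst_hom e u).
Proof.
move=> He Hu; apply: winv_unique; rewrite ?reduced_subst //.
by rewrite -subst_wmul ?wmulwV ?reduced_winv.
Qed.

Lemma eq_subst e f w : e =1 f -> subst_hom e w = subst_hom f w.
Proof. by move=> Ef; elim: w => [|a w IH] //=; rewrite IH /letter_img Ef. Qed.

Lemma subst_comp e f w : reduced_family e -> reduced_family f ->
  subst_hom e (subst_hom f w) = subst_hom (fun i => subst_hom e (f i)) w.
Proof.
move=> He Hf; elim: w => [|a w IH] //=.
rewrite subst_wmul ?reduced_subst // IH /letter_img.
by case: ifP => // _; rewrite subst_winv.
Qed.

Lemma subst_gens w : reduced w -> subst_hom gen w = w.
Proof.
elim: w => [|a w IH] // Hw; rewrite /= IH; last exact: reduced_behead Hw.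
by case: a Hw => i [] Hw; rewrite wmul_cat.
Qed.

(* Unlike [free_basis], this notion is visibly closed under composition. *)
Definition invertible_subst e :=
  reduced_family e /\ exists2 f, reduced_family f &
    (forall i, subst_hom e (f i) = gen i) /\ (forall i, subst_hom f (e i) = gen i).

Lemma invertible_subst_free_basis e : invertible_subst e -> free_basis e.
Proof.
case=> He [f Hf [Hef Hfe]]; split=> //; split.
  move=> y Hy; exists (subst_hom f y); split; first exact: reduced_subst.
  by rewrite subst_comp // (eq_subst _ Hef) subst_gens.
move=> x y Hx Hy /(congr1 (subst_hom f)).
by rewrite !subst_comp // !(eq_subst _ Hfe) !subst_gens.
Qed.

Lemma invertible_subst_comp e g : invertible_subst e -> invertible_subst g ->
  invertible_subst (fun i => subst_hom e (g i)).
Proof.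
case=> He [f Hf [Hef Hfe]] [Hg [h Hh [Hgh Hhg]]].
have Heg := reduced_family_subst g He; have Hhf := reduced_family_subst f Hh.
split=> //; exists (fun i => subst_hom h (f i)) => //.
split=> i; rewrite subst_comp //.
  by rewrite (eq_subst (f := e)) ?Hef // => j; rewrite -subst_comp // Hgh subst_gen.
by rewrite (eq_subst (f := h)) ?Hhg // => j; rewrite -subst_comp // Hfe subst_gen.
Qed.

Lemma invertible_subst_perm (s : {perm 'I_n}) : invertible_subst (fun i => gen (s i)).
Proof.
split=> //; exists (fun i => gen ((s^-1)%g i)) => //.
by split=> i; rewrite subst_gen // ?permKV ?permK.
Qed.

Lemma invertible_subst_gen : invertible_subst gen.
Proof. by split=> //; exists gen. Qed.

Definition nielsen (m l : 'I_n) (b : bool) i : seq (letter n) :=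
  if i == m then [:: (m, false); (l, b)] else gen i.

Lemma nielsen_m m l b : nielsen m l b m = [:: (m, false); (l, b)].
Proof. by rewrite /nielsen eqxx. Qed.

Lemma nielsen_neq m l b i : i != m -> nielsen m l b i = gen i.
Proof. by rewrite /nielsen => /negbTE ->. Qed.

Lemma reduced_nielsen m l b : m != l -> reduced_family (nielsen m l b).
Proof.
move=> Hml i; rewrite /nielsen; case: ifP => // _.
by rewrite /= /inv_letter xpair_eqE eq_sym (negbTE Hml).
Qed.

Lemma invertible_subst_nielsen m l b : m != l -> invertible_subst (nielsen m l b).
Proof.
move=> Hml; split; first exact: reduced_nielsen.
exists (nielsen m l (~~ b)); first exact: reduced_nielsen.
have Hm c : subst_hom (nielsen m l c) (nielsen m l (~~ c) m) = gen m.
  rewrite nielsen_m /= /letter_img /= /nielsen eqxx eq_sym (negbTE Hml).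
  by case: c; rewrite /= /inv_letter /= eqxx.
have Hi c c' i : i != m -> subst_hom (nielsen m l c) (nielsen m l c' i) = gen i.
  by move=> Him; rewrite !nielsen_neq // subst_gen ?nielsen_neq //; apply: reduced_nielsen.
split=> i; have [->|/Hi -> //] := eqVneq i m; first exact: Hm.
by rewrite -{2}[b]negbK Hm.
Qed.

End Substitutions.

Arguments gen {n}.

Section Matrix2.

Variable R : comUnitRingType.
Implicit Types (a b c d p q : R) (M P X Y : 'M[R]_2) (v : 'cV[R]_2).

Definition mk2 a b c d : 'M[R]_2 :=
  \matrix_(i, j) if i == 0 then (if j == 0 then a else b) else (if j == 0 then c else d).

Definition mkv p q : 'cV[R]_2 := \col_i if i == 0 then p else q.

Lemma ord2P (i : 'I_2) : i = 0 \/ i = 1.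
Proof. by case: i => [[|[|k]] Hk]; [left|right|by []]; apply: val_inj. Qed.

Lemma mk2E M : M = mk2 (M 0 0) (M 0 1) (M 1 0) (M 1 1).
Proof. by apply/matrixP => i j; rewrite mxE; case: (ord2P i) => ->; case: (ord2P j) => ->. Qed.

Lemma mk2_surj M : exists a b c d, M = mk2 a b c d.
Proof. by exists (M 0 0), (M 0 1), (M 1 0), (M 1 1); apply: mk2E. Qed.

Lemma mkvE v : v = mkv (v 0 0) (v 1 0).
Proof. by apply/matrixP => i j; rewrite mxE (ord1 j); case: (ord2P i) => ->. Qed.

Lemma mkv_surj v : exists p q, v = mkv p q.
Proof. by exists (v 0 0), (v 1 0); apply: mkvE. Qed.

Lemma mk2_inj a b c d a' b' c' d' : mk2 a b c d = mk2 a' b' c' d' ->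
  [/\ a = a', b = b', c = c' & d = d'].
Proof.
move=> E; have F i j : mk2 a b c d i j = mk2 a' b' c' d' i j by rewrite E.
by move: (F 0 0) (F 0 1) (F 1 0) (F 1 1); rewrite !mxE.
Qed.

Lemma mkv_inj p q p' q' : mkv p q = mkv p' q' -> p = p' /\ q = q'.
Proof.
move=> E; have F i : mkv p q i 0 = mkv p' q' i 0 by rewrite E.
by move: (F 0) (F 1); rewrite !mxE.
Qed.

Lemma mkv_eq0 p q : (mkv p q == 0) = (p == 0) && (q == 0).
Proof.
apply/eqP/andP => [E|[/eqP -> /eqP ->]].
  by have [-> ->] := mkv_inj (etrans E (mkvE 0)); rewrite !mxE.
by apply/matrixP => i j; rewrite !mxE; case: (ord2P i) => ->.
Qed.

Lemma mulmx2 a b c d a' b' c' d' : mk2 a b c d *m mk2 a' b' c' d' =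
  mk2 (a * a' + b * c') (a * b' + b * d') (c * a' + d * c') (c * b' + d * d').
Proof.
apply/matrixP => i j; rewrite !mxE !big_ord_recl big_ord0 !mxE /=.
by case: (ord2P i) => ->; case: (ord2P j) => -> /=; rewrite addr0.
Qed.

Lemma mulmx2v a b c d p q : mk2 a b c d *m mkv p q = mkv (a * p + b * q) (c * p + d * q).
Proof.
apply/matrixP => i j; rewrite !mxE !big_ord_recl big_ord0 !mxE /=.
by case: (ord2P i) => -> /=; rewrite addr0.
Qed.

Lemma submx2 a b c d a' b' c' d' :
  mk2 a b c d - mk2 a' b' c' d' = mk2 (a - a') (b - b') (c - c') (d - d').
Proof. by apply/matrixP => i j; rewrite !mxE; case: (ord2P i) => ->; case: (ord2P j) => ->. Qed.

Lemma scalev2 x p q : x *: mkv p q = mkv (x * p) (x * q).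
Proof. by apply/matrixP => i j; rewrite !mxE; case: (ord2P i) => ->. Qed.

Lemma scalar_mx2 a : a%:M = mk2 a 0 0 a.
Proof. by apply/matrixP => i j; rewrite !mxE; case: (ord2P i) => ->; case: (ord2P j) => ->. Qed.

Lemma mxtrace2 a b c d : \tr (mk2 a b c d) = a + d.
Proof. by rewrite /mxtrace !big_ord_recl big_ord0 !mxE /= addr0. Qed.

Lemma det2 a b c d : \det (mk2 a b c d) = a * d - b * c.
Proof.
rewrite (expand_det_row _ 0) !big_ord_recl big_ord0 /cofactor !mxE /=.
by rewrite !det_mx11 !mxE /=; ring.
Qed.

Lemma det1_unitmx M : \det M = 1 -> M \in unitmx.
Proof. by rewrite unitmxE => ->; apply: unitr1. Qed.

Lemma invmx2 a b c d : a * d - b * c = 1 -> invmx (mk2 a b c d) = mk2 d (- b) (- c) a.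
Proof.
move=> Hdet; have U : mk2 a b c d \in unitmx by rewrite det1_unitmx ?det2.
have E : mk2 a b c d *m mk2 d (- b) (- c) a = 1%:M.
  by rewrite mulmx2 scalar_mx2 -Hdet; congr mk2; ring.
by rewrite -[RHS](mulKmx U) E mulmx1.
Qed.

Lemma eq_of_ideal2 (x y h1 h2 s1 s2 : R) : h1 = 0 -> h2 = 0 ->
  x - y = h1 * s1 + h2 * s2 -> x = y.
Proof. by move=> -> -> /eqP; rewrite !mul0r addr0 subr_eq0 => /eqP. Qed.

Lemma eq_of_ideal4 (x y h1 h2 h3 h4 s1 s2 s3 s4 : R) :
  h1 = 0 -> h2 = 0 -> h3 = 0 -> h4 = 0 ->
  x - y = h1 * s1 + h2 * s2 + h3 * s3 + h4 * s4 -> x = y.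
Proof. by move=> -> -> -> -> /eqP; rewrite !mul0r !addr0 subr_eq0 => /eqP. Qed.

Definition comm_det X Y := \det (X *m Y - Y *m X).

Lemma comm_det2 a b c d a' b' c' d' : comm_det (mk2 a b c d) (mk2 a' b' c' d') =
  - (b * c' - b' * c) ^+ 2
  - (a * b' + b * d' - a' * b - b' * d) * (c * a' + d * c' - c' * a - d' * c).
Proof. by rewrite /comm_det !mulmx2 submx2 det2; ring. Qed.

Lemma comm_detC X Y : comm_det X Y = comm_det Y X.
Proof.
have [a [b [c [d ->]]]] := mk2_surj X; have [a' [b' [c' [d' ->]]]] := mk2_surj Y.
by rewrite !comm_det2; ring.
Qed.

Lemma comm_det_mull X Y : \det Y = 1 -> comm_det (X *m Y) Y = comm_det X Y.
Proof.
by move=> HY; rewrite /comm_det !mulmxA -mulmxBl det_mulmx HY mulr1.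
Qed.

Lemma comm_det_mulVl X Y : \det Y = 1 -> comm_det (X *m invmx Y) Y = comm_det X Y.
Proof.
move=> HY; have U := det1_unitmx HY.
rewrite /comm_det (mulmxKV U).
have -> : X - Y *m (X *m invmx Y) = (X *m Y - Y *m X) *m invmx Y.
  by rewrite mulmxBl (mulmxK U) mulmxA.
by rewrite det_mulmx det_inv HY invr1 mulr1.
Qed.

Lemma mxtrace_commutator X Y : \det X = 1 -> \det Y = 1 ->
  \tr (X *m Y *m invmx X *m invmx Y) = 2 - comm_det X Y.
Proof.
have [a [b [c [d ->]]]] := mk2_surj X; have [a' [b' [c' [d' ->]]]] := mk2_surj Y.
rewrite !det2 => HX HY; rewrite !invmx2 // !mulmx2 mxtrace2 comm_det2.
apply: (eq_of_ideal2 (h1 := a * d - b * c - 1) (h2 := a' * d' - b' * c' - 1)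
  (s1 := 2 * (a' * d' - b' * c')) (s2 := 2));
  [by rewrite HX subrr | by rewrite HY subrr | ring].
Qed.

Lemma mxtrace_mulmxV X Y : \det Y = 1 ->
  \tr (X *m invmx Y) = \tr X * \tr Y - \tr (X *m Y).
Proof.
have [a [b [c [d ->]]]] := mk2_surj X; have [a' [b' [c' [d' ->]]]] := mk2_surj Y.
by rewrite det2 => HY; rewrite invmx2 // !mulmx2 !mxtrace2; ring.
Qed.

Lemma comm_det_fricke X Y : \det X = 1 -> \det Y = 1 ->
  comm_det X Y = 4 + \tr X * \tr Y * \tr (X *m Y)
                 - (\tr X) ^+ 2 - (\tr Y) ^+ 2 - (\tr (X *m Y)) ^+ 2.
Proof.
have [a [b [c [d ->]]]] := mk2_surj X; have [a' [b' [c' [d' ->]]]] := mk2_surj Y.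
rewrite !det2 => HX HY; rewrite !mulmx2 !mxtrace2 comm_det2.
apply: (eq_of_ideal2 (h1 := a * d - b * c - 1) (h2 := a' * d' - b' * c' - 1)
  (s1 := 4 * (a' * d' - b' * c') - (a' + d') ^+ 2) (s2 := 4 - (a + d) ^+ 2));
  [by rewrite HX subrr | by rewrite HY subrr | ring].
Qed.

Definition mxconj P X := invmx P *m X *m P.

Lemma mxconjM P X Y : P \in unitmx -> mxconj P (X *m Y) = mxconj P X *m mxconj P Y.
Proof. by move=> U; rewrite /mxconj !mulmxA mulmxK. Qed.

Lemma det_mxconj P X : P \in unitmx -> \det (mxconj P X) = \det X.
Proof. by move=> U; rewrite /mxconj !det_mulmx det_inv mulrAC mulVr ?mul1r -?unitmxE. Qed.

Lemma mxconj_inj P : P \in unitmx -> injective (mxconj P).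
Proof.
move=> U X Y /(congr1 (fun M => P *m (M *m invmx P))).
by rewrite /mxconj !(mulmxK U) !(mulKVmx U).
Qed.

Lemma comm_det_mxconj P X Y : P \in unitmx ->
  comm_det (mxconj P X) (mxconj P Y) = comm_det X Y.
Proof.
move=> U; rewrite /comm_det -!mxconjM //.
by rewrite -(det_mxconj (X *m Y - Y *m X) U) /mxconj mulmxBr mulmxBl.
Qed.

End Matrix2.

Lemma mulmx_neq0 (R : pzSemiRingType) m n (M : 'M[R]_(m, n)) :
  M != 0 -> exists w : 'cV[R]_n, M *m w != 0.
Proof.
move=> HM; case: (pickP (fun j => col j M != 0)) => [j Hj|H0].
  by exists (delta_mx j 0); rewrite -colE.
case/eqP: HM; apply/matrixP => i j.
by move/negbFE/eqP/matrixP/(_ i 0): (H0 j); rewrite !mxE.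
Qed.

Section Eigenvectors.

Variable F : fieldType.
Implicit Types (a b c d p q l : F) (M P X Y : 'M[F]_2) (v w : 'cV[F]_2).

Definition cross v w := v 0 0 * w 1 0 - v 1 0 * w 0 0.

Definition eigvec M v := exists l, M *m v = l *: v.

Lemma cross2 p q p' q' : cross (mkv p q) (mkv p' q') = p * q' - q * p'.
Proof. by rewrite /cross !mxE. Qed.

Lemma mulmx_mkv10 M : M *m mkv 1 0 = mkv (M 0 0) (M 1 0).
Proof. by rewrite {1}(mk2E M) mulmx2v; congr mkv; ring. Qed.

Lemma eigvec_crossP M v : v != 0 -> eigvec M v <-> cross (M *m v) v = 0.
Proof.
have [p [q ->]] := mkv_surj v; have [a [b [c [d ->]]]] := mk2_surj M.
rewrite mkv_eq0 mulmx2v cross2 => Hv; split=> [[l]|E].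
  by rewrite mulmx2v scalev2 => /mkv_inj[-> ->]; ring.
have [Hp|Hp] := eqVneq p 0.
  have Hq : q != 0 by move: Hv; rewrite Hp eqxx.
  exists ((c * p + d * q) / q); rewrite mulmx2v scalev2; congr mkv; last by rewrite mulfVK.
  have : (a * p + b * q) * q = 0 by rewrite -E Hp; ring.
  by move/eqP; rewrite mulf_eq0 (negbTE Hq) orbF => /eqP ->; rewrite Hp mulr0.
exists ((a * p + b * q) / p); rewrite mulmx2v scalev2; congr mkv; first by rewrite mulfVK.
by apply: (mulIf Hp); rewrite mulrAC mulfVK //; apply/eqP; rewrite eq_sym -subr_eq0 E.
Qed.

Lemma eigvec_invmx M v : M \in unitmx -> eigvec M v -> eigvec (invmx M) v.
Proof.
move=> U [l Hl]; have [->|Hv] := eqVneq v 0; first by exists 0; rewrite mulmx0 scaler0.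
have Hl0 : l != 0.
  by apply: contraNneq Hv => l0; rewrite -(mulKmx U v) Hl l0 scale0r mulmx0.
by exists l^-1; rewrite -{1}[v](scalerK Hl0) -scalemxAr -Hl mulKmx.
Qed.

Lemma cross_mulmx_comm X Y w :
  cross (X *m ((X *m Y - Y *m X) *m w)) ((X *m Y - Y *m X) *m w) = comm_det X Y *
    (X 1 0 * w 0 0 ^+ 2 + (X 1 1 - X 0 0) * w 0 0 * w 1 0 - X 0 1 * w 1 0 ^+ 2).
Proof.
have [a [b [c [d ->]]]] := mk2_surj X; have [a' [b' [c' [d' ->]]]] := mk2_surj Y.
have [p [q ->]] := mkv_surj w.
by rewrite comm_det2 !mulmx2 submx2 !mulmx2v cross2 !mxE /=; ring.
Qed.

(* When [det [X, Y] = 0] but [[X, Y] <> 0], the image of [[X, Y]] is a common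
   eigenline of [X] and [Y]. *)
Lemma comm_det0_common_eigvec X Y : comm_det X Y = 0 -> X *m Y != Y *m X ->
  exists2 v, v != 0 & eigvec X v /\ eigvec Y v.
Proof.
move=> K; rewrite -subr_eq0 => /mulmx_neq0[w Hw].
exists ((X *m Y - Y *m X) *m w) => //; split; apply/(eigvec_crossP _ Hw).
  by rewrite cross_mulmx_comm K mul0r.
have -> : (X *m Y - Y *m X) *m w = (Y *m X - X *m Y) *m (- w).
  by rewrite mulmxN -mulNmx opprB.
by rewrite cross_mulmx_comm comm_detC K mul0r.
Qed.

Lemma eigvec_mxconj P X v : P \in unitmx -> P *m mkv 1 0 = v ->
  eigvec X v <-> mxconj P X 1 0 = 0.
Proof.
move=> U HP; split=> [[l Hl]|H].
  have : mxconj P X *m mkv 1 0 = mkv l 0.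
    by rewrite /mxconj -mulmxA HP -mulmxA Hl -scalemxAr -HP mulKmx // scalev2 mulr1 mulr0.
  by rewrite mulmx_mkv10 => /mkv_inj[].
have XP : X *m P = P *m mxconj P X by rewrite /mxconj !mulmxA mulmxV ?mul1mx.
exists (mxconj P X 0 0).
by rewrite -HP mulmxA XP -mulmxA mulmx_mkv10 H scalemxAr scalev2 mulr1 mulr0.
Qed.

Lemma exists_mxconj_e1 v : v != 0 -> exists2 P, P \in unitmx & P *m mkv 1 0 = v.
Proof.
have [p [q ->]] := mkv_surj v; rewrite mkv_eq0 => Hv.
have [Hq|Hq] := eqVneq q 0.
  exists (mk2 p 0 q 1); last by rewrite mulmx2v; congr mkv; ring.
  by rewrite unitmxE det2 Hq !mulr0 mulr1 subr0 unitfE; move: Hv; rewrite Hq eqxx andbT.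
exists (mk2 p 1 q 0); last by rewrite mulmx2v; congr mkv; ring.
by rewrite unitmxE det2 mulr0 mul1r sub0r unitfE oppr_eq0.
Qed.

Definition triangular_form a b c d (x y : F) := b * x ^+ 2 + (d - a) * x * y - c * y ^+ 2.

Lemma comm_det_triangular a b c d a1 b1 d1 :
  comm_det (mk2 a b c d) (mk2 a1 b1 0 d1) = c * triangular_form a b c d (a1 - d1) b1.
Proof. by rewrite comm_det2 /triangular_form; ring. Qed.

(* Write [p T = (t11 - t22, t12)] for upper triangular [T], so that
   [det [M, T] = c Q (p T)] with [Q := triangular_form a b c d].  As [p (T1 T2) = a1 p T2 + d2 p T1], the form [c Q]
   vanishes at [p T1], [p T2] and [a1 p T2 + d2 p T1], hence everywhere since
   [det (p T1, p T2) <> 0] (this is [T1 T2 <> T2 T1]); its [y^2]-coefficient is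
   [- c^2]. *)
Lemma comm_det0_triangular a b c d a1 b1 d1 a2 b2 d2 :
  a1 * d1 = 1 -> a2 * d2 = 1 -> b2 * (a1 - d1) - b1 * (a2 - d2) != 0 ->
  comm_det (mk2 a b c d) (mk2 a1 b1 0 d1) = 0 ->
  comm_det (mk2 a b c d) (mk2 a2 b2 0 d2) = 0 ->
  comm_det (mk2 a b c d) (mk2 a1 b1 0 d1 *m mk2 a2 b2 0 d2) = 0 -> c = 0.
Proof.
move=> D1 D2 HX K1 K2 K12.
rewrite mulmx2 !mul0r !mulr0 !add0r !addr0 comm_det_triangular in K12.
rewrite comm_det_triangular in K1; rewrite comm_det_triangular in K2.
set X := b2 * (a1 - d1) - b1 * (a2 - d2) in HX.
set Q := triangular_form a b c d.
set B := 2 * b * (a1 - d1) * (a2 - d2) + (d - a) * ((a1 - d1) * b2 + b1 * (a2 - d2))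
  - 2 * c * b1 * b2.
have Ha1 : a1 != 0 by apply: contra_eq_neq D1 => ->; rewrite mul0r eq_sym oner_neq0.
have Hd2 : d2 != 0 by apply: contra_eq_neq D2 => ->; rewrite mulr0 eq_sym oner_neq0.
have EB : X ^+ 2 * (a1 * d2) * (c * B) =
    X ^+ 2 * (c * Q (a1 * a2 - d1 * d2) (a1 * b2 + b1 * d2))
    - (d2 * X) ^+ 2 * (c * Q (a1 - d1) b1) - (a1 * X) ^+ 2 * (c * Q (a2 - d2) b2).
  by rewrite /X /B /Q /triangular_form; ring.
rewrite K1 K2 K12 !mulr0 !subr0 in EB.
have {}EB : c * B = 0.
  apply: (mulfI (x := X ^+ 2 * (a1 * d2))); first by rewrite !mulf_neq0 ?expf_neq0.
  by rewrite EB mulr0.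
have Ec : X ^+ 2 * (- c ^+ 2) = (a2 - d2) ^+ 2 * (c * Q (a1 - d1) b1)
    + (a1 - d1) ^+ 2 * (c * Q (a2 - d2) b2) - (a1 - d1) * (a2 - d2) * (c * B).
  by rewrite /X /B /Q /triangular_form; ring.
rewrite K1 K2 EB !mulr0 addr0 subr0 in Ec.
by move/eqP: Ec; rewrite mulf_eq0 oppr_eq0 !expf_eq0 /= (negbTE HX) => /eqP.
Qed.

Lemma common_eigvec_extend X Y M v : \det X = 1 -> \det Y = 1 -> v != 0 ->
  eigvec X v -> eigvec Y v -> X *m Y != Y *m X ->
  comm_det M X = 0 -> comm_det M Y = 0 -> comm_det M (X *m Y) = 0 -> eigvec M v.
Proof.
move=> DX DY Hv EX EY HXY KX KY KXY.
have [P U HP] := exists_mxconj_e1 Hv.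
have [a1 [b1 [c1 [d1 E1]]]] := mk2_surj (mxconj P X).
have [a2 [b2 [c2 [d2 E2]]]] := mk2_surj (mxconj P Y).
have [a [b [c [d E]]]] := mk2_surj (mxconj P M).
have Hc1 : c1 = 0 by have := (eigvec_mxconj X U HP).1 EX; rewrite E1 mxE.
have Hc2 : c2 = 0 by have := (eigvec_mxconj Y U HP).1 EY; rewrite E2 mxE.
subst c1 c2.
have D1 : a1 * d1 = 1 by rewrite -DX -(det_mxconj _ U) E1 det2 mulr0 subr0.
have D2 : a2 * d2 = 1 by rewrite -DY -(det_mxconj _ U) E2 det2 mulr0 subr0.
have HX : b2 * (a1 - d1) - b1 * (a2 - d2) != 0.
  apply: contra_neq HXY => HX; apply: (mxconj_inj U).
  rewrite !mxconjM // E1 E2 !mulmx2; congr mk2; try ring.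
  by apply/eqP; rewrite -subr_eq0 -HX; apply/eqP; ring.
apply/(eigvec_mxconj M U HP); rewrite E mxE /=.
apply: (comm_det0_triangular (a := a) (b := b) (d := d) D1 D2 HX).
- by rewrite -E1 -E comm_det_mxconj.
- by rewrite -E2 -E comm_det_mxconj.
- by rewrite -E1 -E2 -E -mxconjM // comm_det_mxconj.
Qed.

Lemma eigvec_comm X Y v : X *m Y = Y *m X -> ~~ is_scalar_mx X -> v != 0 ->
  eigvec X v -> eigvec Y v.
Proof.
have [a [b [c [d ->]]]] := mk2_surj X; have [a' [b' [c' [d' ->]]]] := mk2_surj Y.
move=> HXY Hns Hv /(eigvec_crossP _ Hv) EX; apply/(eigvec_crossP _ Hv).
have [p [q Ev]] := mkv_surj v; rewrite Ev !mulmx2v !cross2 in EX *.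
rewrite !mulmx2 in HXY; case/mk2_inj: HXY => e00 e01 e10 _.
have z00 : a * a' + b * c' - (a' * a + b' * c) = 0 by rewrite e00 subrr.
have z01 : a * b' + b * d' - (a' * b + b' * d) = 0 by rewrite e01 subrr.
have z10 : c * a' + d * c' - (c' * a + d' * c) = 0 by rewrite e10 subrr.
have : [|| b != 0, a - d != 0 | c != 0].
  apply: contraR Hns; rewrite !negb_or !negbK subr_eq0 => /and3P[/eqP-> /eqP-> /eqP->].
  by apply/is_scalar_mxP; exists d; rewrite scalar_mx2.
case/or3P=> [Hb|Had|Hc].
- apply: (mulfI Hb); rewrite mulr0.
  apply: (eq_of_ideal4 EX z00 z01 z10 (s1 := b') (s2 := - p ^+ 2) (s3 := - (p * q)) (s4 := 0)).
  ring.
- apply: (mulfI Had); rewrite mulr0.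
  apply: (eq_of_ideal4 EX z00 z01 z10 (s1 := a' - d') (s2 := 0) (s3 := q ^+ 2) (s4 := p ^+ 2)).
  ring.
- apply: (mulfI Hc); rewrite mulr0.
  apply: (eq_of_ideal4 EX z00 z01 z10 (s1 := c') (s2 := - q ^+ 2) (s3 := 0) (s4 := p * q)).
  ring.
Qed.

End Eigenvectors.

Section ClosedField.

Variable C : numClosedFieldType.
Implicit Types (M : 'M[C]_2).

Lemma exists_eigvec M : exists2 v, v != 0 & eigvec M v.
Proof.
have [a [b [c [d ->]]]] := mk2_surj M.
have [Hc|Hc] := eqVneq c 0.
  have He1 : mkv 1 0 != 0 :> 'cV[C]_2 by rewrite mkv_eq0 oner_eq0.
  exists (mkv 1 0) => //; apply/(eigvec_crossP _ He1).
  by rewrite mulmx2v cross2 Hc; ring.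
(* [(p, 1)] is an eigenvector iff [c p^2 + (d - a) p - b = 0]. *)
pose s := sqrtC ((a - d) ^+ 2 + 4 * c * b).
have Hs : s ^+ 2 = (a - d) ^+ 2 + 4 * c * b by apply: sqrtCK.
pose p := (s - (a - d)) / (- 2 * c).
have Hv : mkv p 1 != 0 by rewrite mkv_eq0 oner_eq0 andbF.
exists (mkv p 1) => //; apply/(eigvec_crossP _ Hv); rewrite mulmx2v cross2.
apply: (mulfI (x := - 4 * c)); first by rewrite mulf_neq0 // oppr_eq0 pnatr_eq0.
by rewrite mulr0 -[RHS](subrr (s ^+ 2)) {2}Hs /p; field.
Qed.

Lemma common_eigvec (I : finType) (A : I -> 'M[C]_2) :
  (forall i, \det (A i) = 1) ->
  (forall i j, i != j -> comm_det (A i) (A j) = 0) ->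
  (forall i j k, i != j -> k != i -> k != j -> comm_det (A k) (A i *m A j) = 0) ->
  exists2 v, v != 0 & forall i, eigvec (A i) v.
Proof.
move=> D K2 K3.
case: (pickP (fun ij : I * I => A ij.1 *m A ij.2 != A ij.2 *m A ij.1)) => [[i j] /= Hij|Hc].
  have Hne : i != j by apply: contraNneq Hij => ->.
  have [v Hv [Ei Ej]] := comm_det0_common_eigvec (K2 _ _ Hne) Hij.
  exists v => // k; have [->|Hki] := eqVneq k i => //; have [->|Hkj] := eqVneq k j => //.
  by apply: (common_eigvec_extend (D i) (D j) Hv Ei Ej Hij); rewrite ?K2 ?K3.
case: (pickP (fun k => ~~ is_scalar_mx (A k))) => [k Hk|Hs].
  have [v Hv Ev] := exists_eigvec (A k).
  exists v => // i; apply: (eigvec_comm _ Hk Hv Ev).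
  by apply/eqP; move/negbFE: (Hc (k, i)).
exists (mkv 1 0) => [|i]; first by rewrite mkv_eq0 oner_eq0.
by have /is_scalar_mxP[a ->] := negbFE (Hs i); exists a; rewrite mul_scalar_mx.
Qed.

End ClosedField.

Section Traces.

Variable C : numFieldType.
Implicit Types (x y z : C) (X Y : 'M[C]_2).

Lemma fricke_eq0 x y z : x ^+ 2 = 4 -> y ^+ 2 = 4 -> z ^+ 2 = 4 -> (x * y - z) ^+ 2 = 4 ->
  4 + x * y * z - x ^+ 2 - y ^+ 2 - z ^+ 2 = 0.
Proof.
move=> Hx Hy Hz Hw; apply: (mulIf (x := 2)); first by rewrite pnatr_eq0.
rewrite mul0r; apply: (eq_of_ideal4 (h1 := x ^+ 2 - 4) (h2 := y ^+ 2 - 4)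
  (h3 := z ^+ 2 - 4) (h4 := (x * y - z) ^+ 2 - 4)
  (s1 := y ^+ 2 - 2) (s2 := 2) (s3 := -1) (s4 := -1));
  [by rewrite Hx subrr | by rewrite Hy subrr | by rewrite Hz subrr | by rewrite Hw subrr | ring].
Qed.

Lemma sqr_mxtrace_neq4 X Y : \det X = 1 -> \det Y = 1 -> comm_det X Y != 0 ->
  [\/ (\tr X) ^+ 2 != 4, (\tr Y) ^+ 2 != 4, (\tr (X *m Y)) ^+ 2 != 4
    | (\tr (X *m invmx Y)) ^+ 2 != 4].
Proof.
move=> DX DY K.
have [h1|] := eqVneq ((\tr X) ^+ 2) 4; last by constructor 1.
have [h2|] := eqVneq ((\tr Y) ^+ 2) 4; last by constructor 2.
have [h3|] := eqVneq ((\tr (X *m Y)) ^+ 2) 4; last by constructor 3.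
have [h4|] := eqVneq ((\tr (X *m invmx Y)) ^+ 2) 4; last by constructor 4.
by rewrite mxtrace_mulmxV // in h4; rewrite comm_det_fricke // fricke_eq0 ?eqxx in K.
Qed.

End Traces.

Lemma sigma12_comm_det (X Y : 'M[CC]_2) : \det X = 1 -> \det Y = 1 ->
  sigma12 X Y = - comm_det X Y.
Proof. by move=> DX DY; rewrite /sigma12 mxtrace_commutator // addrAC subrr add0r. Qed.

Lemma nu1_neq0 (X : 'M[CC]_2) : (\tr X) ^+ 2 != 4 -> nu1 X != 0.
Proof.
apply: contra_neq => H.
have -> : (\tr X) ^+ 2 = nu1 X * 2 + 4 by rewrite /nu1; field.
by rewrite H mul0r add0r.
Qed.

Section Representation.

Variables (n : nat) (rho : seq (letter n) -> 'M[CC]_2).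
Hypothesis rho_rep : SL2_rep rho.

Lemma det_rep u : reduced u -> \det (rho u) = 1.
Proof. by case: rho_rep => Hdet _; apply: Hdet. Qed.

Lemma rep_wmul u v : reduced u -> reduced v -> rho (wmul u v) = rho u *m rho v.
Proof. by case: rho_rep => _; apply. Qed.

Lemma rep_nil : rho [::] = 1%:M.
Proof.
have U := det1_unitmx (det_rep (u := [::]) isT).
by rewrite -[LHS](mulKmx U) -rep_wmul // mulVmx.
Qed.

Lemma rep_winv u : reduced u -> rho (winv u) = invmx (rho u).
Proof.
move=> Hu; have U := det1_unitmx (det_rep Hu).
by rewrite -[LHS](mulKmx U) -rep_wmul ?reduced_winv // wmulwV // rep_nil mulmx1.
Qed.

Lemma rep_nielsen e m l b : reduced_family e ->
  rho (subst_hom e (nielsen m l b m)) =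
  rho (e m) *m (if b then invmx (rho (e l)) else rho (e l)).
Proof.
move=> He; rewrite nielsen_m /= wmulw1 ?reduced_letter_img // rep_wmul ?reduced_letter_img //.
by rewrite /letter_img /=; case: b; rewrite ?rep_winv.
Qed.

Lemma irreducible_no_common_eigvec v : irreducible_rep rho -> v != 0 ->
  ~ (forall i, eigvec (rho (gen i)) v).
Proof.
move=> Irr Hv Hgen; apply: Irr.
have Hg g : reduced g -> eigvec (rho g) v.
  elim: g => [|a g IH] Hg; first by exists 1; rewrite rep_nil mul1mx scale1r.
  have [mu Hmu] := IH (reduced_behead Hg).
  have [l Hl] : eigvec (rho [:: a]) v.
    case: a {Hg} => i []; last exact: Hgen.
    rewrite -[[:: _]]/(winv (gen i)) rep_winv //.
    by apply: eigvec_invmx (det1_unitmx (det_rep _)) (Hgen i).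
  exists (mu * l); rewrite -cat1s -wmul_cat // rep_wmul ?(reduced_behead Hg) //.
  by rewrite -mulmxA Hmu -scalemxAr Hl scalerA.
exists <<v^T>>%MS; split.
- by rewrite mxrank_gen rank_rV trmx_eq0 Hv.
- by rewrite mxrank_gen rank_rV leq_b1.
- move=> g /Hg[l Hl]; rewrite (eqmxMr _ (genmxE _)) genmxE -trmx_mul Hl.
  by rewrite linearZ /= scalemx_sub.
Qed.

End Representation.

Lemma exists_perm2 (T : finType) (x0 x1 y0 y1 : T) : x0 != x1 -> y0 != y1 ->
  exists s : {perm T}, s x0 = y0 /\ s x1 = y1.
Proof.
move=> Hx Hy; set z := tperm x0 y0 y1.
have Hz : z != x0.
  by apply: contra_neq Hy => /(congr1 (tperm x0 y0)); rewrite tpermK tpermL.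
exists (tperm x1 z * tperm x0 y0)%g; rewrite !permM; split.
  by rewrite [tperm x1 z x0]tpermD ?tpermL // eq_sym.
by rewrite tpermL tpermK.
Qed.

Section Basis.

Variables (n : nat) (rho : seq (letter n) -> 'M[CC]_2) (o0 o1 : 'I_n).
Hypotheses (rho_rep : SL2_rep rho) (o01 : o0 != o1).

Lemma exists_subst_comm_det_neq0 : irreducible_rep rho ->
  exists2 e, invertible_subst e & comm_det (rho (e o0)) (rho (e o1)) != 0.
Proof.
move=> Irr.
case: (pickP (fun ij : 'I_n * 'I_n =>
    (ij.1 != ij.2) && (comm_det (rho (gen ij.1)) (rho (gen ij.2)) != 0)))
  => [[i j] /andP[/= Hij K] | K2].
  have [s [s0 s1]] := exists_perm2 o01 Hij.
  by exists (fun m => gen (s m)); [apply: invertible_subst_perm | rewrite s0 s1].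
case: (pickP (fun ijk : 'I_n * 'I_n * 'I_n => let: (i, j, k) := ijk in
    [&& i != j, k != i, k != j & comm_det (rho (gen k)) (rho (gen i) *m rho (gen j)) != 0]))
  => [[[i j] k] /and4P[Hij Hki Hkj K] | K3].
  have [s [s0 s1]] := exists_perm2 o01 Hki.
  have Hl : o1 != (s^-1)%g j by apply: contra_neq Hij => E; rewrite -s1 E permKV.
  exists (fun m => subst_hom (fun m => gen (s m)) (nielsen o1 ((s^-1)%g j) false m)).
    apply: invertible_subst_comp; first exact: invertible_subst_perm.
    exact: invertible_subst_nielsen.
  have Hs : reduced_family (fun m => gen (s m)) by [].
  rewrite (nielsen_neq _ _ o01) (subst_gen _ Hs) (rep_nielsen rho_rep _ _ _ Hs) s0 s1 permKV.
  exact: K.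
have [v Hv Ev] : exists2 v, v != 0 & forall i, eigvec (rho (gen i)) v.
  apply: common_eigvec => [i|i j Hij|i j k Hij Hki Hkj]; first exact: det_rep.
    by apply/eqP; move: (K2 (i, j)); rewrite /= Hij => /negbFE.
  by apply/eqP; move: (K3 (i, j, k)); rewrite /= Hij Hki Hkj => /negbFE.
by case: (irreducible_no_common_eigvec rho_rep Irr Hv Ev).
Qed.

Lemma exists_free_basis_sigma12_nu1 e : invertible_subst e ->
  comm_det (rho (e o0)) (rho (e o1)) != 0 ->
  exists e', free_basis e' /\
    sigma12 (rho (e' o0)) (rho (e' o1)) != 0 /\ nu1 (rho (e' o0)) != 0.
Proof.
move=> He K; have Hre := He.1.
have DG : \det (rho (e o0)) = 1 := det_rep rho_rep (Hre o0).
have DH : \det (rho (e o1)) = 1 := det_rep rho_rep (Hre o1).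
suff [g Hg [S N]] : exists2 g, invertible_subst g &
    sigma12 (rho (subst_hom e (g o0))) (rho (subst_hom e (g o1))) != 0 /\
    nu1 (rho (subst_hom e (g o0))) != 0.
  exists (fun i => subst_hom e (g i)); split=> //.
  exact/invertible_subst_free_basis/invertible_subst_comp.
have o10 : o1 != o0 by rewrite eq_sym.
have [T|T|T|T] := sqr_mxtrace_neq4 DG DH K.
- exists gen; first exact: invertible_subst_gen.
  rewrite !(subst_gen _ Hre) (sigma12_comm_det DG DH) oppr_eq0.
  by split; [exact: K | exact: nu1_neq0].
- exists (fun i => gen (tperm o0 o1 i)); first exact: invertible_subst_perm.
  rewrite !(subst_gen _ Hre) tpermL tpermR (sigma12_comm_det DH DG) oppr_eq0 comm_detC.
  by split; [exact: K | exact: nu1_neq0].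
- exists (nielsen o0 o1 false); first exact: invertible_subst_nielsen.
  have DGH : \det (rho (e o0) *m rho (e o1)) = 1 by rewrite det_mulmx DG DH mulr1.
  rewrite (rep_nielsen rho_rep _ _ _ Hre) (nielsen_neq _ _ o10) (subst_gen _ Hre) /=.
  rewrite (sigma12_comm_det DGH DH) oppr_eq0 (comm_det_mull _ DH).
  by split; [exact: K | exact: nu1_neq0].
- exists (nielsen o0 o1 true); first exact: invertible_subst_nielsen.
  have DGH : \det (rho (e o0) *m invmx (rho (e o1))) = 1.
    by rewrite det_mulmx det_inv DG DH invr1 mulr1.
  rewrite (rep_nielsen rho_rep _ _ _ Hre) (nielsen_neq _ _ o10) (subst_gen _ Hre) /=.
  rewrite (sigma12_comm_det DGH DH) oppr_eq0 (comm_det_mulVl _ DH).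
  by split; [exact: K | exact: nu1_neq0].
Qed.

End Basis.

Unset Implicit Arguments.

Theorem proposition4p3 (n : nat) (hn : (1 < n)%N)
    (rho : seq (letter n) -> 'M[CC]_2) :
  SL2_rep rho -> irreducible_rep rho ->
  exists e : 'I_n -> seq (letter n),
    free_basis e /\
    sigma12 (rho (e (Ordinal (ltnW hn)))) (rho (e (Ordinal hn))) != 0 /\
    nu1 (rho (e (Ordinal (ltnW hn)))) != 0.
Proof.
move=> Hrho Irr; have o01 : Ordinal (ltnW hn) != Ordinal hn by [].
have [e He K] := exists_subst_comm_det_neq0 Hrho o01 Irr.
exact (exists_free_basis_sigma12_nu1 Hrho o01 He K).
Qed.
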